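(* Let $\mathsf{F}(X)=X\times X$ (with $\mathsf{F}h=h\times h$) and $\mathsf{B}=\mathcal{P}_{fin}$ the finite covariant powerset functor ($\mathsf{B}h(S)=h[S]$). Then the category $\mathit{Dialg}(\mathsf{F},\mathsf{B})$ has no final object.
   Context: For functors $\mathsf{F},\mathsf{B}:\mathbf{Set}\to\mathbf{Set}$, an $(\mathsf{F},\mathsf{B})$-dialgebra is a pair $(X,f)$ with $X$ a set (the carrier) and $f:\mathsf{F}X\to\mathsf{B}X$ a function. A homomorphism $h:(X,f)\to(Y,g)$ is a function $h:X\to Y$ with $g\circ\mathsf{F}h=\mathsf{B}h\circ f$. Dialgebras and homomorphisms form the category $\mathit{Dialg}(\mathsf{F},\mathsf{B})$. *)

From Stdlib Require Import List.
Set Implicit Arguments.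

(* Finite subsets of X are represented as predicates S : X -> Prop that are
   enumerated by some list.  P_fin X = { S : X -> Prop | finite_pred S },
   with extensional equality of subsets. *)
Definition finite_pred (X : Type) (S : X -> Prop) : Prop :=
  exists l : list X, forall x, S x <-> In x l.

Record dialg : Type := Dialg {
  carrier : Type;
  str : carrier * carrier -> carrier -> Prop;   (* str p = the subset f(p) *)
  str_fin : forall p, finite_pred (str p)
}.

(* h is a homomorphism: g o (h x h) = P_fin h o f, i.e. for all (x,y),
   g (h x, h y) = h[f (x,y)] as subsets. *)
Definition is_hom (A B : dialg) (h : carrier A -> carrier B) : Prop :=
  forall (x y : carrier A) (b : carrier B),
    str B (h x, h y) b <-> exists a, str A (x, y) a /\ h a = b.

Definition is_final (Z : dialg) : Prop :=
  forall A : dialg,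
    exists h : carrier A -> carrier Z,
      is_hom A Z h /\
      forall h' : carrier A -> carrier Z, is_hom A Z h' -> forall a, h' a = h a.

(* Call a point z of a dialgebra idle when its structure map sends the
   diagonal pair (z, z) to the empty set.
   1. Homomorphisms preserve idleness, since they transport the structure
      map: h[f(x,x)] = g(h x, h x).
   2. In the one-point dialgebra with empty structure, every constant map
      onto an idle point of Z is a homomorphism; so if Z is final, uniqueness
      of the homomorphism out of it forces Z to have at most one idle point.
   3. The dialgebra on bool with f(x,y) = {x} for x <> y and f(x,x) = {}
      has only idle points, yet f(false,true) is nonempty.  Its homomorphism
      h into a final Z identifies false and true (step 2 and step 1), so
      g(h false, h true) = g(h false, h false) = {}, contradicting
      h false \in h[f(false,true)] = g(h false, h true). *)

From Stdlib Require Import List Bool.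

Definition idle {Z : dialg} (z : carrier Z) : Prop :=
  forall b, ~ str Z (z, z) b.

Lemma hom_preserves_idle {A Z : dialg} {h : carrier A -> carrier Z} {a : carrier A} :
  is_hom A Z h -> idle a -> idle (h a).
Proof.
  intros Hh Ha b Hb.
  apply Hh in Hb as [a' [Ha' _]].
  exact (Ha a' Ha').
Qed.

Definition empty_dialg : dialg.
Proof.
  refine (@Dialg unit (fun _ _ => False) _).
  intros p; exists nil; simpl; tauto.
Defined.

Lemma const_idle_is_hom {Z : dialg} (z : carrier Z) :
  idle z -> is_hom empty_dialg Z (fun _ => z).
Proof.
  intros Hz x y b; simpl; split.
  - intros Hb; exfalso; exact (Hz b Hb).
  - intros [_ [[] _]].
Qed.

Lemma final_idle_unique {Z : dialg} {z z' : carrier Z} :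
  is_final Z -> idle z -> idle z' -> z = z'.
Proof.
  intros HZ Hz Hz'.
  destruct (HZ empty_dialg) as [h0 [_ Hunique]].
  rewrite (Hunique _ (const_idle_is_hom z Hz) tt).
  symmetry; exact (Hunique _ (const_idle_is_hom z' Hz') tt).
Qed.

Definition distinguish_str (p : bool * bool) (a : bool) : Prop :=
  fst p <> snd p /\ a = fst p.

Definition distinguish_dialg : dialg.
Proof.
  refine (@Dialg bool distinguish_str _).
  intros [x y]; unfold distinguish_str; simpl.
  destruct (bool_dec x y) as [Exy | Nxy].
  - exists nil; simpl; intros a; split; [intros [Hne _]; contradiction | tauto].
  - exists (x :: nil); simpl; intros a; split.
    + intros [_ ->]; auto.
    + intros [<- | []]; auto.
Defined.

Lemma distinguish_all_idle (x : carrier distinguish_dialg) : idle x.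
Proof. intros b [Hne _]; apply Hne; reflexivity. Qed.

Theorem mainTheorem2 : ~ (exists Z : dialg, is_final Z).
Proof.
  intros [Z HZ].
  destruct (HZ distinguish_dialg) as [h [Hh _]].
  assert (Hidle : forall x : bool, idle (h x))
    by (intros x; exact (hom_preserves_idle Hh (distinguish_all_idle x))).
  assert (Hcollapse : h true = h false)
    by exact (final_idle_unique HZ (Hidle true) (Hidle false)).
  assert (Hstr : str Z (h false, h true) (h false)).
  { apply Hh; exists false; split; [split; [discriminate | reflexivity] | reflexivity]. }
  rewrite Hcollapse in Hstr.
  exact (Hidle false _ Hstr).
Qed.
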